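(* Let $P$ be a poset with least element $0$. Then the strong metric dimension $\mathrm{sdim}_M(G(P))$ is finite if and only if $G(P)$ is a finite graph.
   Context: For a poset $P$ with $0$ and $A\subseteq P$, $A^{\ell}=\{b\in P: b\le a \text{ for all } a\in A\}$. $Z^*(P)$ is the set of nonzero $a\in P$ for which some nonzero $b$ satisfies $\{a,b\}^{\ell}=\{0\}$. The zero-divisor graph $G(P)$ has vertex set $Z^*(P)$, distinct $a,b$ adjacent iff $\{a,b\}^{\ell}=\{0\}$. In a connected graph $G$, a vertex $w$ strongly resolves vertices $u,v$ if some shortest $u$–$w$ path contains $v$ or some shortest $v$–$w$ path contains $u$. A set $W\subseteq V(G)$ is a strong resolving set if every pair of vertices is strongly resolved by some vertex of $W$; $\mathrm{sdim}_M(G)$ is the minimum cardinality of a strong resolving set. *)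

From HB Require Import structures.
From mathcomp Require Import all_boot all_order.
Set Implicit Arguments. Unset Strict Implicit. Unset Printing Implicit Defensive.
Import Order.TTheory.
Local Open Scope order_scope.

(* A poset P with least element 0 is modelled as T : bPOrderType d, 0 = \bot. *)
Section ZeroDivisorGraph.
Context {d : Order.disp_t} {T : bPOrderType d}.

Definition lower_zero (a b : T) : Prop :=
  forall c : T, c <= a -> c <= b -> c = \bot.

Definition Zstar (a : T) : Prop :=
  a != \bot /\ exists b : T, b != \bot /\ lower_zero a b.

Definition zadj (a b : T) : Prop :=
  [/\ Zstar a, Zstar b, a != b & lower_zero a b].

(* a walk u = x0, x1, ..., xk = v in G(P), given as u and the list [x1;..;xk];
   its length is size p *)
Fixpoint is_walk (u : T) (p : seq T) (v : T) : Prop :=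
  match p with
  | [::] => u = v
  | x :: p' => zadj u x /\ is_walk x p' v
  end.

Definition shortest_walk (u : T) (p : seq T) (v : T) : Prop :=
  is_walk u p v /\ forall q : seq T, is_walk u q v -> size p <= size q.

Definition strongly_resolves (w u v : T) : Prop :=
  (exists p, shortest_walk u p w /\ v \in u :: p) \/
  (exists p, shortest_walk v p w /\ u \in v :: p).

Definition strong_resolving_set (W : seq T) : Prop :=
  (forall w, w \in W -> Zstar w) /\
  forall u v, Zstar u -> Zstar v -> u != v ->
    exists2 w, w \in W & strongly_resolves w u v.

(* sdim_M(G(P)) is finite: some strong resolving set is finite *)
Definition sdim_finite : Prop := exists W : seq T, strong_resolving_set W.

Definition zgraph_finite : Prop := exists s : seq T, forall a, Zstar a -> a \in s.

End ZeroDivisorGraph.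

(* Every vertex of G(P) lies within distance 3 of every other: if a ⟂ a' and
   b ⟂ b', then either a' ⟂ b' and a - a' - b' - b is a walk, or a' and b'
   have a common nonzero lower bound c and a - c - b is a walk.  Hence a
   finite strong resolving set W assigns to each vertex a distance vector in
   {0,..,3}^W.  This vector is injective: if w strongly resolves u <> v, say
   v lies on a shortest u-w path, then d(v,w) < d(u,w).  So G(P) is finite.
   Conversely the whole (finite) vertex set strongly resolves G(P), since v
   lies on every shortest u-v path. *)
From mathcomp Require Import all_boot all_order.
From Stdlib Require Import Classical.
Set Implicit Arguments. Unset Strict Implicit. Unset Printing Implicit Defensive.
Import Order.TTheory.

Section FiniteSeparation.
Variables (T I : eqType).

Lemma finite_bigcup (P : nat -> T -> Prop) (n : nat) :
  (forall k, (k < n)%N -> exists s : seq T, forall u, P k u -> u \in s) ->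
  exists s : seq T, forall k u, (k < n)%N -> P k u -> u \in s.
Proof.
elim: n => [|n IH] Pfin; first by exists [::].
have [s Ps] := IH (fun k lt_kn => Pfin k (ltnW lt_kn)).
have [t Pt] := Pfin n (ltnSn n).
exists (t ++ s) => k u; rewrite ltnS leq_eqVlt mem_cat.
by case/orP=> [/eqP -> /Pt -> // | lt_kn /(Ps _ _ lt_kn) ->]; rewrite orbT.
Qed.

(* [D u w k] reads "the w-coordinate of u is k". *)
Lemma finite_of_separating (S : T -> Prop) (D : T -> I -> nat -> Prop)
    (W : seq I) (n : nat) :
  (forall u w, S u -> w \in W -> exists2 k, (k < n)%N & D u w k) ->
  (forall u w k j, S u -> w \in W -> D u w k -> D u w j -> k = j) ->
  (forall u v, S u -> S v ->
     (forall w k, w \in W -> (D u w k <-> D v w k)) -> u = v) ->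
  exists s : seq T, forall u, S u -> u \in s.
Proof.
elim: W S => [|w W IH] S Dtot Dfun Dsep.
  case: (classic (exists a, S a)) => [[a Sa]|noS]; last first.
    by exists [::] => u Su; case: noS; exists u.
  by exists [:: a] => u Su; rewrite (Dsep u a) ?mem_head.
have Wsub w' : w' \in W -> w' \in w :: W by rewrite inE => ->; rewrite orbT.
have fiber_finite k : (k < n)%N ->
    exists s : seq T, forall u, S u /\ D u w k -> u \in s.
  move=> _; apply: IH.
  - by move=> u w' [Su _] /Wsub; apply: Dtot.
  - by move=> u w' k' j [Su _] /Wsub; apply: Dfun.
  move=> u v [Su Duk] [Sv Dvk] sameW; apply: Dsep => // w' j.
  rewrite inE => /orP [/eqP -> | /sameW //].
  split=> [Duj | Dvj].
  + by rewrite -(Dfun u w k j Su (mem_head _ _) Duk Duj).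
  + by rewrite -(Dfun v w k j Sv (mem_head _ _) Dvk Dvj).
have [s Hs] := finite_bigcup fiber_finite.
exists s => u Su; have [k lt_kn Duk] := Dtot u w Su (mem_head _ _).
exact: Hs lt_kn _.
Qed.

Lemma enum_of_finite_pred (P : T -> Prop) (s : seq T) :
  (forall a, P a -> a \in s) -> exists W : seq T, forall a, a \in W <-> P a.
Proof.
elim: s => [|x s IH] in P *; first by move=> P0; exists [::] => a; split=> // /P0.
move=> Ps; have /IH [W HW] : forall a, P a /\ a != x -> a \in s.
  by move=> a [/Ps]; rewrite inE => /orP [/eqP ->|]; rewrite ?eqxx.
case: (classic (P x)) => Px.
  exists (x :: W) => a; rewrite inE; split=> [/orP [/eqP -> // | /HW []] //|Pa].
  by case: eqVneq => //= ax; apply/HW.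
exists W => a; rewrite HW; split=> [[] // | Pa]; split=> //.
by apply/eqP => eq_ax; apply: Px; rewrite -eq_ax.
Qed.

End FiniteSeparation.

Section ZeroDivisorGraphDistance.
Context {d : Order.disp_t} {T : bPOrderType d}.
Local Open Scope order_scope.

Lemma lower_zero_sym (a b : T) : lower_zero a b -> lower_zero b a.
Proof. by move=> lz c cb ca; apply: lz. Qed.

Lemma lower_zero_refl (a : T) : lower_zero a a -> a = \bot.
Proof. by apply. Qed.

Lemma lower_zero_le (a b c : T) : c <= b -> lower_zero a b -> lower_zero a c.
Proof. by move=> le_cb lz e ea ec; apply: lz ea (le_trans ec le_cb). Qed.

Lemma zadj_lower_zero (a b : T) :
  a != \bot -> b != \bot -> lower_zero a b -> zadj a b.
Proof.
move=> a0 b0 lz; split=> //.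
- by split=> //; exists b.
- by split=> //; exists a; split=> //; apply: lower_zero_sym.
by apply: contra a0 => /eqP eq_ab; move: lz; rewrite -eq_ab => /lower_zero_refl ->.
Qed.

Lemma mem_walk_end (u v : T) (p : seq T) : is_walk u p v -> v \in u :: p.
Proof.
elim: p u => [|x p IH] u /=; first by move=> ->; rewrite mem_head.
by case=> _ /IH; rewrite !inE => /orP [->|->]; rewrite !orbT.
Qed.

Lemma is_walk_suffix (u v x : T) (p1 p2 : seq T) :
  is_walk u (p1 ++ x :: p2) v -> is_walk x p2 v.
Proof. by elim: p1 u => [|y p1 IH] u /= [] // _ /IH. Qed.

Lemma zstar_walk3 (x y : T) : Zstar x -> Zstar y ->
  exists2 p, is_walk x p y & (size p <= 3)%N.
Proof.
case: (eqVneq x y) => [<- _ _|_]; first by exists [::].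
move=> [x0 [x' [x'0 lz_xx']]] [y0 [y' [y'0 lz_yy']]].
have adj_xx' := zadj_lower_zero x0 x'0 lz_xx'.
have adj_y'y := zadj_lower_zero y'0 y0 (lower_zero_sym lz_yy').
case: (classic (lower_zero x' y')) => [lz_x'y'|].
  by exists [:: x'; y'; y]; split=> //; split=> //; apply: zadj_lower_zero.
move=> /not_all_ex_not [c] /not_all_ex_not [le_cx'] /not_all_ex_not [le_cy'] c0.
have {}c0 : c != \bot by apply/eqP.
exists [:: c; y] => //; split; last split=> //; apply: zadj_lower_zero => //.
- exact: lower_zero_le lz_xx'.
- exact/lower_zero_sym/(lower_zero_le le_cy').
Qed.

Lemma shortest_walk_exists (u w : T) (p : seq T) : is_walk u p w ->
  exists2 q, shortest_walk u q w & (size q <= size p)%N.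
Proof.
have [n] := ubnP (size p); elim: n p => // n IH p lt_pn walk_p.
case: (classic (exists2 q, is_walk u q w & (size q < size p)%N)).
  move=> [q walk_q lt_qp].
  have [r short_r le_rq] := IH q (leq_trans lt_qp lt_pn) walk_q.
  by exists r => //; apply: leq_trans le_rq (ltnW lt_qp).
move=> no_shorter; exists p => //; split=> // q walk_q.
by rewrite leNgt; apply/negP => lt_qp; apply: no_shorter; exists q.
Qed.

Definition is_dist (u w : T) (k : nat) : Prop :=
  exists2 p, shortest_walk u p w & size p = k.

Lemma is_dist_functional (u w : T) (k j : nat) :
  is_dist u w k -> is_dist u w j -> k = j.
Proof.
move=> [p [walk_p min_p] <-] [q [walk_q min_q] <-].
by apply: le_anti; rewrite min_p // min_q.
Qed.

Lemma zstar_dist_lt4 (u w : T) : Zstar u -> Zstar w ->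
  exists2 k, (k < 4)%N & is_dist u w k.
Proof.
move=> Zu Zw; have [p walk_p le_p3] := zstar_walk3 Zu Zw.
have [q short_q le_qp] := shortest_walk_exists walk_p.
by exists (size q); [apply: leq_ltn_trans le_qp _ | exists q].
Qed.

Lemma is_dist_shortest_lt (u v w : T) (p : seq T) (k : nat) :
  shortest_walk u p w -> v \in p -> is_dist v w k -> (k < size p)%N.
Proof.
move=> [walk_p _] /splitPr split_p; case: split_p walk_p => p1 p2 walk_p.
move=> [q [_ min_q] <-]; have := min_q _ (is_walk_suffix walk_p).
by rewrite size_cat /= addnS ltnS => /leq_trans; apply; apply: leq_addl.
Qed.

Lemma strongly_resolves_dist (w u v : T) : u != v ->
  strongly_resolves w u v -> exists k, ~ (is_dist u w k <-> is_dist v w k).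
Proof.
have resolved_left a b p : a != b -> shortest_walk a p w -> b \in a :: p ->
    exists k, ~ (is_dist a w k <-> is_dist b w k).
  move=> ab short_p; rewrite inE eq_sym (negbTE ab) /= => b_p.
  exists (size p) => [[/(_ (ex_intro2 _ _ p short_p erefl)) dist_b _]].
  by have := is_dist_shortest_lt short_p b_p dist_b; rewrite ltnn.
move=> uv [[p [short_p v_p]] | [p [short_p u_p]]].
  exact: resolved_left short_p v_p.
rewrite eq_sym in uv; have [k dist_k] := resolved_left _ _ _ uv short_p u_p.
by exists k => dist_uv; apply: dist_k; apply: iff_sym.
Qed.

End ZeroDivisorGraphDistance.

Theorem mainTheorem2 (d : Order.disp_t) (T : bPOrderType d) :
  @sdim_finite d T <-> @zgraph_finite d T.
Proof.
split.
  move=> [W [WZ resolving]].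
  apply: (@finite_of_separating _ _ _ is_dist W 4).
  - by move=> u w Zu /WZ Zw; apply: zstar_dist_lt4.
  - by move=> u w k j _ _; apply: is_dist_functional.
  move=> u v Zu Zv same_dist; apply: NNPP => /eqP uv.
  have [w /same_dist dist_w resolves] := resolving u v Zu Zv uv.
  by have [k] := strongly_resolves_dist uv resolves; apply.
move=> [s Zs]; have [W WZ] := enum_of_finite_pred Zs.
exists W; split=> [w /WZ // | u v Zu Zv _].
exists v; first exact/WZ.
have [k _ [p short_p _]] := zstar_dist_lt4 Zu Zv.
by left; exists p; split=> //; apply: mem_walk_end (proj1 short_p).
Qed.
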